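(* Let $E$ be a real Hilbert space with $\dim(E)\ge2$, $h\in E$ a unit vector, $H^+=\{x\in E\mid (h,x)>0\}$, and define $\preceq$ on $H^+$ by $x\preceq y\iff\|x-y_\perp\|\le y_h$. Then (a) every finite subset of $H^+$ has a right bound in $(H^+,\preceq)$; (b) a pair $x,y\in H^+$ has a left bound in $(H^+,\preceq)$ if and only if $\|x_\perp-y_\perp\|<x_h+y_h$.
   Context: For $x\in E$, $x_h=(h,x)$ and $x_\perp=x-(h,x)h$. A right bound of $P$ is an $s\in H^+$ with $p\preceq s$ for all $p\in P$; a left bound is an $s\in H^+$ with $s\preceq p$ for all $p\in P$. *)

From mathcomp Require Import all_boot all_order all_algebra.
From mathcomp Require Import reals.
Set Implicit Arguments. Unset Strict Implicit. Unset Printing Implicit Defensive.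
Import Order.TTheory GRing.Theory Num.Theory.
Local Open Scope ring_scope.

Section Hilbert.
Variables (R : realType) (V : lmodType R) (ip : V -> V -> R).

Definition hnorm (x : V) : R := Num.sqrt (ip x x).

Record is_hilbert : Prop := IsHilbert {
  ip_sym : forall x y, ip x y = ip y x;
  ip_linl : forall a x y z, ip (a *: x + y) z = a * ip x z + ip y z;
  ip_ge0 : forall x, 0 <= ip x x;
  ip_eq0 : forall x, ip x x = 0 -> x = 0;
  ip_complete : forall u : nat -> V,
    (forall e : R, 0 < e -> exists N : nat, forall m n : nat,
        (N <= m)%N -> (N <= n)%N -> hnorm (u m - u n) < e) ->
    exists l : V, forall e : R, 0 < e -> exists N : nat, forall n : nat,
        (N <= n)%N -> hnorm (u n - l) < e
}.

Definition dim_ge2 : Prop :=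
  exists u v : V, forall a b : R, a *: u + b *: v = 0 -> a = 0 /\ b = 0.

Variable h : V.
Definition comp_h (x : V) : R := ip h x.
Definition perp (x : V) : V := x - ip h x *: h.
Definition Hplus (x : V) : Prop := 0 < ip h x.
Definition prec (x y : V) : Prop := hnorm (x - perp y) <= comp_h y.

Definition right_bound (P : V -> Prop) (s : V) : Prop :=
  Hplus s /\ forall p, P p -> prec p s.
Definition left_bound (P : V -> Prop) (s : V) : Prop :=
  Hplus s /\ forall p, P p -> prec s p.
End Hilbert.

From mathcomp Require Import all_boot all_order all_algebra.
From mathcomp Require Import reals.
From mathcomp Require Import ring lra.
Import Order.TTheory GRing.Theory Num.Theory.
Set Implicit Arguments. Unset Strict Implicit.
Local Open Scope ring_scope.

(* Writing x - y_perp = (x_perp - y_perp) + x_h h and using Pythagoras, for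
   y_h >= 0 the relation x ⪯ y reads ||x_perp - y_perp||^2 + x_h^2 <= y_h^2.
   (a) t h is a right bound of P as soon as t > 0 and t >= ||p|| on P.
   (b) If s ⪯ x and s ⪯ y with s_h > 0, then ||s_perp - x_perp|| < x_h and
   ||s_perp - y_perp|| < y_h, and the triangle inequality gives the strict
   bound.  Conversely, let a = x_h, b = y_h, d = ||x_perp - y_perp|| < a + b
   and c = d / (a + b) < 1.  The point of [x_perp, y_perp] dividing it in the
   ratio a : b is at distance a c from x_perp and b c from y_perp; lifted to
   height min(a, b) (1 - c) it is below x and y, because
   (a c)^2 + a^2 (1 - c)^2 <= a^2 c^2 + a^2 (1 - c^2) = a^2. *)

Lemma sqr_mulD_compl_le (R : realFieldType) (a m c : R) :
  0 <= m <= a -> 0 <= c <= 1 -> (a * c) ^+ 2 + (m * (1 - c)) ^+ 2 <= a ^+ 2.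
Proof.
move=> /andP[m_ge0 ma] /andP[c_ge0 c_le1].
have m2 : m ^+ 2 <= a ^+ 2 by rewrite ler_pXn2r ?nnegrE // (le_trans m_ge0).
have c2 : (1 - c) ^+ 2 <= 1 - c ^+ 2 by nra.
have := ler_pM (sqr_ge0 _) (sqr_ge0 _) m2 c2.
by rewrite !exprMn; lra.
Qed.

Section InnerProduct.
Variables (R : realType) (V : lmodType R) (ip : V -> V -> R).
Hypothesis HV : is_hilbert ip.

Lemma ip0l z : ip 0 z = 0.
Proof. by have := ip_linl HV 1 0 0 z; rewrite scaler0 addr0 mul1r; lra. Qed.

Lemma ipDl x y z : ip (x + y) z = ip x z + ip y z.
Proof. by have := ip_linl HV 1 x y z; rewrite scale1r mul1r. Qed.

Lemma ipZl a x z : ip (a *: x) z = a * ip x z.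
Proof. by have := ip_linl HV a x 0 z; rewrite addr0 ip0l addr0. Qed.

Lemma ipBl x y z : ip (x - y) z = ip x z - ip y z.
Proof. by rewrite ipDl -scaleN1r ipZl mulN1r. Qed.

Lemma ipDr x y z : ip z (x + y) = ip z x + ip z y.
Proof. by rewrite !(ip_sym HV z) ipDl. Qed.

Lemma ipZr a x z : ip z (a *: x) = a * ip z x.
Proof. by rewrite !(ip_sym HV z) ipZl. Qed.

Lemma ipBr x y z : ip z (x - y) = ip z x - ip z y.
Proof. by rewrite !(ip_sym HV z) ipBl. Qed.

Lemma ip_scale a x : ip (a *: x) (a *: x) = a ^+ 2 * ip x x.
Proof. by rewrite ipZl ipZr mulrA -expr2. Qed.

Lemma cauchy_schwarz u v : ip u v ^+ 2 <= ip u u * ip v v.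
Proof.
have [vv0|vv_neq0] := eqVneq (ip v v) 0.
  by rewrite (ip_eq0 HV vv0) (ip_sym HV u) !ip0l expr2 !mul0r mulr0.
have vv_gt0 : 0 < ip v v by rewrite lt_def vv_neq0 ip_ge0.
have := ip_ge0 HV (ip v v *: u - ip u v *: v).
rewrite !ipBl !ipBr !ipZl !ipZr (ip_sym HV v u) => ge0.
have : 0 <= ip v v * (ip u u * ip v v - ip u v ^+ 2).
  by move: ge0; congr (_ <= _); ring.
by rewrite pmulr_rge0 // subr_ge0.
Qed.

Lemma hnorm_ge0 x : 0 <= hnorm ip x.
Proof. exact: sqrtr_ge0. Qed.

Lemma hnorm_sqr x : hnorm ip x ^+ 2 = ip x x.
Proof. by rewrite sqr_sqrtr // ip_ge0. Qed.

Lemma hnorm_le x c : 0 <= c -> (hnorm ip x <= c) = (ip x x <= c ^+ 2).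
Proof. by move=> c_ge0; rewrite -hnorm_sqr ler_pXn2r ?nnegrE ?hnorm_ge0. Qed.

Lemma hnormZ a x : hnorm ip (a *: x) = `|a| * hnorm ip x.
Proof. by rewrite /hnorm ip_scale sqrtrM ?sqr_ge0 // sqrtr_sqr. Qed.

Lemma ler_hnormB u v : hnorm ip (u - v) <= hnorm ip u + hnorm ip v.
Proof.
rewrite hnorm_le ?addr_ge0 ?hnorm_ge0 // ipBl !ipBr (ip_sym HV v u).
have : `|ip u v| <= hnorm ip u * hnorm ip v.
  rewrite -(ler_pXn2r (n := 2)) ?nnegrE ?mulr_ge0 ?hnorm_ge0 //.
  by rewrite real_normK ?num_real // exprMn !hnorm_sqr cauchy_schwarz.
have := ler_norm (- ip u v); rewrite normrN -!hnorm_sqr.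
set nu := hnorm ip u; set nv := hnorm ip v => *; nra.
Qed.

Lemma hnorm_le_sum (P : seq V) p :
  p \in P -> hnorm ip p <= \sum_(q <- P) hnorm ip q.
Proof.
move=> pP; rewrite (big_rem _ pP) /= lerDl.
by rewrite sumr_ge0 // => q _; apply: hnorm_ge0.
Qed.

Variable h : V.
Hypothesis hh : ip h h = 1.

Lemma ip_h_perp x : ip h (perp ip h x) = 0.
Proof. by rewrite /perp ipBr ipZr hh mulr1 subrr. Qed.

Lemma perp_lift w b : ip h w = 0 -> perp ip h (w + b *: h) = w.
Proof. by move=> hw; rewrite /perp ipDr ipZr hw hh add0r mulr1 addrK. Qed.

Lemma comp_h_lift w b : ip h w = 0 -> comp_h ip h (w + b *: h) = b.
Proof. by move=> hw; rewrite /comp_h ipDr ipZr hw hh add0r mulr1. Qed.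

Lemma ip_lift w b : ip h w = 0 -> ip (w + b *: h) (w + b *: h) = ip w w + b ^+ 2.
Proof.
move=> hw; rewrite !ipDl !ipDr ip_scale (ip_sym HV (b *: h)) ipZr (ip_sym HV w h).
by rewrite hw hh; ring.
Qed.

Lemma perpB x y : perp ip h (x - y) = perp ip h x - perp ip h y.
Proof.
by apply/esym; rewrite /perp ipBr scalerBl opprD opprK addrACA opprB (addrC (- _)).
Qed.

Lemma precE x y : 0 <= comp_h ip h y ->
  prec ip h x y <->
  hnorm ip (perp ip h x - perp ip h y) ^+ 2 + comp_h ip h x ^+ 2 <= comp_h ip h y ^+ 2.
Proof.
move=> y_ge0; rewrite /prec hnorm_le // hnorm_sqr.
have -> : x - perp ip h y = (perp ip h x - perp ip h y) + comp_h ip h x *: h.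
  by rewrite /perp /comp_h addrAC subrK.
by rewrite ip_lift // -perpB ip_h_perp.
Qed.

Lemma right_bound_Zh (P : V -> Prop) t :
  0 < t -> (forall p, P p -> hnorm ip p <= t) -> right_bound ip h P (t *: h).
Proof.
move=> t_gt0 Pt; split; first by rewrite /Hplus ipZr hh mulr1.
by move=> p /Pt; rewrite /prec /perp /comp_h ipZr hh mulr1 subrr subr0.
Qed.

Lemma exists_right_bound (P : seq V) : exists s, right_bound ip h (fun p => p \in P) s.
Proof.
have sum_ge0 : 0 <= \sum_(q <- P) hnorm ip q.
  by rewrite sumr_ge0 // => q _; apply: hnorm_ge0.
exists ((1 + \sum_(q <- P) hnorm ip q) *: h); apply: right_bound_Zh; first lra.
by move=> p /hnorm_le_sum; lra.
Qed.

Lemma prec_perp_lt s z : 0 < comp_h ip h s -> prec ip h s z ->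
  hnorm ip (perp ip h s - perp ip h z) < comp_h ip h z.
Proof.
move=> s_gt0 sz; have z_ge0 : 0 <= comp_h ip h z := le_trans (hnorm_ge0 _) sz.
move/(precE s z_ge0): sz => sz.
rewrite -(ltr_pXn2r (n := 2)) ?nnegrE ?hnorm_ge0 //.
by have := exprn_gt0 2 s_gt0; lra.
Qed.

Lemma left_bound_perp_lt x y s : left_bound ip h (fun p => p = x \/ p = y) s ->
  hnorm ip (perp ip h x - perp ip h y) < comp_h ip h x + comp_h ip h y.
Proof.
case=> s_gt0 s_le.
have sx := prec_perp_lt s_gt0 (s_le x (or_introl erefl)).
have sy := prec_perp_lt s_gt0 (s_le y (or_intror erefl)).
have := ler_hnormB (perp ip h s - perp ip h y) (perp ip h s - perp ip h x).
move: sx sy; move: (perp ip h s) (perp ip h x) (perp ip h y) => ps px py sx sy.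
rewrite opprB addrC subrKA; lra.
Qed.

Lemma exists_left_bound x y : 0 < comp_h ip h x -> 0 < comp_h ip h y ->
  hnorm ip (perp ip h x - perp ip h y) < comp_h ip h x + comp_h ip h y ->
  exists s, left_bound ip h (fun p => p = x \/ p = y) s.
Proof.
set a := comp_h ip h x; set b := comp_h ip h y.
set u := perp ip h x - perp ip h y; set d := hnorm ip u => a_gt0 b_gt0 d_lt.
have ab_neq0 : a + b != 0 by rewrite lt0r_neq0 // addr_gt0.
pose c := d / (a + b); pose l := a / (a + b); pose e := Num.min a b * (1 - c).
have c_lt1 : c < 1 by rewrite ltr_pdivrMr ?mul1r ?addr_gt0.
have c_bounds : 0 <= c <= 1.
  by rewrite (ltW c_lt1) andbT divr_ge0 ?hnorm_ge0 // ltW ?addr_gt0.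
have min_a : 0 <= Num.min a b <= a.
  by rewrite le_min (ltW a_gt0) (ltW b_gt0) ge_min lexx.
have min_b : 0 <= Num.min a b <= b.
  by rewrite le_min (ltW a_gt0) (ltW b_gt0) ge_min lexx orbT.
have hu : ip h u = 0 by rewrite /u -perpB ip_h_perp.
pose w := perp ip h x - l *: u.
have hw : ip h w = 0 by rewrite ipBr ipZr hu ip_h_perp mulr0 subr0.
have lift_prec z : 0 <= comp_h ip h z ->
    hnorm ip (w - perp ip h z) ^+ 2 + e ^+ 2 <= comp_h ip h z ^+ 2 ->
    prec ip h (w + e *: h) z.
  by move=> z_ge0; rewrite precE // perp_lift // comp_h_lift.
exists (w + e *: h); split.
  rewrite /Hplus -[ip h _]/(comp_h ip h _) comp_h_lift // mulr_gt0 ?subr_gt0 //.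
  by rewrite lt_min a_gt0.
move=> p [->|->]; (apply: lift_prec; first exact: ltW).
  rewrite /w addrAC subrr add0r -scaleNr hnormZ normrN ger0_norm; last first.
    by rewrite divr_ge0 ?addr_ge0 // ltW.
  have -> : l * d = a * c by rewrite /l /c; field.
  exact: sqr_mulD_compl_le min_a c_bounds.
rewrite /w addrAC -/u -{1}[u]scale1r -scalerBl hnormZ ger0_norm; last first.
  by rewrite subr_ge0 ler_pdivrMr ?mul1r ?lerDl ?ltW ?addr_gt0.
have -> : (1 - l) * d = b * c by rewrite /l /c; field.
exact: sqr_mulD_compl_le min_b c_bounds.
Qed.

End InnerProduct.

Theorem mainTheorem18 (R : realType) (V : lmodType R) (ip : V -> V -> R)
  (HV : is_hilbert ip) (Hdim : dim_ge2 V) (h : V) (Hh : hnorm ip h = 1) :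
  (forall P : seq V, (forall p, p \in P -> Hplus ip h p) ->
     exists s, right_bound ip h (fun p => p \in P) s) /\
  (forall x y : V, Hplus ip h x -> Hplus ip h y ->
     ((exists s, left_bound ip h (fun p => p = x \/ p = y) s) <->
      hnorm ip (perp ip h x - perp ip h y) < comp_h ip h x + comp_h ip h y)).
Proof.
have hh : ip h h = 1 by rewrite -(hnorm_sqr HV) Hh expr1n.
split=> [P _|x y x_gt0 y_gt0]; first exact: exists_right_bound.
split=> [[s]|]; first exact: left_bound_perp_lt.
exact: exists_left_bound.
Qed.
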